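(* Let $R$ be an abelian Rickart $*$-ring and $a_1,a_2,b_1,b_2\in R$ with $a_1\perp a_2$, $b_1\perp b_2$, $a_1\sim b_1$ and $a_2\sim b_2$. Then $a_1+a_2\sim b_1+b_2$.
   Context: A Rickart $*$-ring is a $*$-ring in which the right annihilator of every element is generated as a right ideal by a projection ($e=e^2=e^*$); it has unity. Abelian: all idempotents central. Orthogonality: $a\perp b$ iff there is $x\in R$ with $xa=a=ax^*$ and $xb=0=bx^*$. Equivalence: $a\sim b$ iff there exist $x,y\in R$ with $aa^*=xx^*$, $bb^*=yy^*$, $a^*a=y^*y$, $b^*b=x^*x$, $x=ax=xb$, $y=by=ya$. *)

From mathcomp Require Import all_boot all_algebra.
Set Implicit Arguments. Unset Strict Implicit. Unset Printing Implicit Defensive.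
Import GRing.Theory.
Local Open Scope ring_scope.

Definition is_involution (R : pzRingType) (star : R -> R) : Prop :=
  [/\ forall x y, star (x + y) = star x + star y,
      forall x y, star (x * y) = star y * star x
    & forall x, star (star x) = x].

Definition is_projection (R : pzRingType) (star : R -> R) (e : R) : Prop :=
  e * e = e /\ star e = e.

Definition rickart (R : pzRingType) (star : R -> R) : Prop :=
  forall x : R, exists e : R, is_projection star e /\
    (forall y : R, x * y = 0 <-> exists z : R, y = e * z).

Definition abelian_ring (R : pzRingType) : Prop :=
  forall e : R, e * e = e -> forall r : R, e * r = r * e.

Definition orth (R : pzRingType) (star : R -> R) (a b : R) : Prop :=
  exists x : R, [/\ x * a = a, a * star x = a, x * b = 0 & b * star x = 0].

Definition equiv_star (R : pzRingType) (star : R -> R) (a b : R) : Prop :=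
  exists x y : R,
    a * star a = x * star x /\ b * star b = y * star y /\
    star a * a = star y * y /\ star b * b = star x * x /\
    x = a * x /\ x = x * b /\ y = b * y /\ y = y * a.

(* Orthogonality in an abelian Rickart *-ring is realised by a central
   projection: if u witnesses a1 ⊥ a2 and e generates the right annihilator
   of u, then e is central, e a2 = a2 and e a1 = e u a1 = 0.  A central
   projection separating two elements kills every cross product between them
   and their adjoints, and it still separates x1, x2 whenever x1 = a1 x1 and
   x2 = a2 x2.  Hence the witnesses of a1 ~ b1 and a2 ~ b2 can simply be added. *)
From mathcomp Require Import all_boot all_algebra.
Local Open Scope ring_scope.
Import GRing.Theory.

Section Separation.

Set Implicit Arguments.

Variables (R : pzRingType) (star : R -> R).

Definition separated (u v : R) : Prop :=
  exists e : R, [/\ is_projection star e, forall r, e * r = r * e,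
                    e * u = 0 & e * v = v].

Lemma orth_separated (u v : R) :
  rickart star -> abelian_ring R -> orth star u v -> separated u v.
Proof.
move=> rickR abR [x [xu _ xv _]].
have [e [[ee se] annihE]] := rickR x.
have [z ->] := (annihE v).1 xv.
have xe : x * e = 0 by apply/(annihE e).2; exists 1; rewrite mulr1.
exists e; split=> //; first exact: abR.
- by rewrite -xu mulrA (abR e ee) xe mul0r.
- by rewrite mulrA ee.
Qed.

Lemma separated_mulr (u v r s : R) :
  separated u v -> separated (u * r) (v * s).
Proof. by case=> e [pe ce eu ev]; exists e; rewrite !mulrA eu ev mul0r. Qed.

Hypothesis Hstar : is_involution star.

Let starD x y : star (x + y) = star x + star y. Proof. by case: Hstar. Qed.
Let starM x y : star (x * y) = star y * star x. Proof. by case: Hstar. Qed.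
Let starK x : star (star x) = x. Proof. by case: Hstar. Qed.

Let star0 : star 0 = 0.
Proof. by apply: (addrI (star 0)); rewrite -starD !addr0. Qed.

Let starN x : star (- x) = - star x.
Proof. by apply/eqP; rewrite -subr_eq0 opprK -starD addNr star0. Qed.

Let star1 : star 1 = 1.
Proof. by have := starM (star 1) 1; rewrite mulr1 !starK mulr1. Qed.

Lemma separated_sym (u v : R) : separated u v -> separated v u.
Proof.
case=> e [[ee se] ce eu ev]; exists (1 - e); split.
- split; last by rewrite starD starN star1 se.
  by rewrite mulrBl !mulrBr ee !mul1r mulr1 subrr subr0.
- by move=> r; rewrite mulrBl mulrBr mul1r mulr1 ce.
- by rewrite mulrBl mul1r ev subrr.
- by rewrite mulrBl mul1r eu subr0.
Qed.

Lemma separated_starl (u v : R) : separated u v -> separated (star u) v.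
Proof.
case=> e [[ee se] ce eu ev]; exists e; split=> //.
by rewrite -{1}se -starM -ce eu star0.
Qed.

Lemma separated_starr (u v : R) : separated u v -> separated u (star v).
Proof. by move/separated_sym/separated_starl/separated_sym. Qed.

Lemma separated_mul0 (u v : R) : separated u v -> u * v = 0.
Proof. by case=> e [_ ce eu ev]; rewrite -ev mulrA -ce eu mul0r. Qed.

Lemma mul_add_cross0 (u1 u2 v1 v2 : R) :
  u1 * v2 = 0 -> u2 * v1 = 0 -> (u1 + u2) * (v1 + v2) = u1 * v1 + u2 * v2.
Proof. by move=> u1v2 u2v1; rewrite mulrDl !mulrDr u1v2 u2v1 addr0 add0r. Qed.

Lemma separated_mul_star_add (u v : R) :
  separated u v -> (u + v) * star (u + v) = u * star u + v * star v.
Proof.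
move=> sep; rewrite starD mul_add_cross0 //.
- exact/separated_mul0/separated_starr.
- exact/separated_mul0/separated_starr/separated_sym.
Qed.

Lemma separated_star_mul_add (u v : R) :
  separated u v -> star (u + v) * (u + v) = star u * u + star v * v.
Proof.
move=> sep; rewrite starD mul_add_cross0 //.
- exact/separated_mul0/separated_starl.
- exact/separated_mul0/separated_starl/separated_sym.
Qed.

Lemma separated_mulD_fixl (u1 u2 v1 v2 : R) : separated u1 u2 ->
  v1 = u1 * v1 -> v2 = u2 * v2 -> v1 + v2 = (u1 + u2) * (v1 + v2).
Proof.
move=> sep v1E v2E; rewrite mul_add_cross0 -?v1E -?v2E //.
- by rewrite v2E mulrA (separated_mul0 sep) mul0r.
- by rewrite v1E mulrA (separated_mul0 (separated_sym sep)) mul0r.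
Qed.

Lemma separated_mulD_fixr (u1 u2 v1 v2 : R) : separated u1 u2 ->
  v1 = v1 * u1 -> v2 = v2 * u2 -> v1 + v2 = (v1 + v2) * (u1 + u2).
Proof.
move=> sep v1E v2E; rewrite mul_add_cross0 -?v1E -?v2E //.
- by rewrite v1E -mulrA (separated_mul0 sep) mulr0.
- by rewrite v2E -mulrA (separated_mul0 (separated_sym sep)) mulr0.
Qed.

Lemma equiv_star_add (a1 a2 b1 b2 : R) :
  separated a1 a2 -> separated b1 b2 ->
  equiv_star star a1 b1 -> equiv_star star a2 b2 ->
  equiv_star star (a1 + a2) (b1 + b2).
Proof.
move=> sepa sepb [x1 [y1 [aa1 [bb1 [ay1 [bx1 [xa1 [xb1 [yb1 ya1]]]]]]]]].
move=> [x2 [y2 [aa2 [bb2 [ay2 [bx2 [xa2 [xb2 [yb2 ya2]]]]]]]]].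
have sepx : separated x1 x2 by rewrite xa1 xa2; apply: separated_mulr.
have sepy : separated y1 y2 by rewrite yb1 yb2; apply: separated_mulr.
exists (x1 + x2), (y1 + y2).
rewrite !separated_mul_star_add // !separated_star_mul_add //.
rewrite aa1 aa2 bb1 bb2 ay1 ay2 bx1 bx2.
do !split.
- exact: separated_mulD_fixl.
- exact: separated_mulD_fixr.
- exact: separated_mulD_fixl.
- exact: separated_mulD_fixr.
Qed.

End Separation.

Theorem mainTheorem14 (R : pzRingType) (star : R -> R)
  (Hstar : is_involution star) (Hrick : rickart star) (Hab : abelian_ring R)
  (a1 a2 b1 b2 : R)
  (Ha : orth star a1 a2) (Hb : orth star b1 b2)
  (H1 : equiv_star star a1 b1) (H2 : equiv_star star a2 b2) :
  equiv_star star (a1 + a2) (b1 + b2).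
Proof.
by apply: equiv_star_add => //; apply: orth_separated.
Qed.
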